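(* Let $T$ be a compact Hausdorff space, $C(T)$ the ring of real-valued continuous functions on $T$, $\mathcal{I} = [0,1]$, and $n \geq 1$. Let $H : T \times \mathcal{I} \to S^{n-1}$ be continuous, and let $v_0, v_1 \in C(T)^n$ be the unimodular rows whose coordinate functions are the components of $H(\cdot, 0)$ and $H(\cdot, 1)$ respectively. Then there exists $\alpha \in SL_n(C(T))$ which can be connected to the identity matrix and satisfies $\alpha v_0^t = v_1^t$.
   Context: A continuous map $f = (f_1, \ldots, f_n) : T \to S^{n-1}$ gives a unimodular row $(f_1, \ldots, f_n)$ over $C(T)$ (since $\sum f_i^2 = 1$). A matrix $\alpha \in SL_n(C(T))$ ''can be connected to the identity'' means there is $\beta(X) \in SL_n(C(T)[X])$ with $\beta(0) = I_n$ and $\beta(1) = \alpha$. *)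

From HB Require Import structures.
From mathcomp Require Import all_boot all_order all_algebra.
From mathcomp Require Import all_classical all_reals all_analysis.
Set Implicit Arguments. Unset Strict Implicit. Unset Printing Implicit Defensive.
Import Order.TTheory GRing.Theory Num.Theory.
Import numFieldNormedType.Exports.
Local Open Scope ring_scope.
Local Open Scope classical_set_scope.

(* C(T) is realised as the subring of continuous functions inside the
   (commutative, nontrivial for pointed T) ring of all functions T -> R
   (ring structure of mathcomp-analysis 'functions.v'). *)

Section CT.
Variables (T : ptopologicalType) (R : realType).

Definition isCT (f : T -> R) : Prop := continuous f.

Definition CT_mx n (a : 'M[T -> R]_n) : Prop := forall i j, isCT (a i j).

Definition SL_CT n (a : 'M[T -> R]_n) : Prop := CT_mx a /\ \det a = 1.

Definition isCTpoly (p : {poly T -> R}) : Prop := forall k, isCT p`_k.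

Definition SL_CTpoly n (b : 'M[{poly T -> R}]_n) : Prop :=
  (forall i j, isCTpoly (b i j)) /\ \det b = 1.

Definition connected_to_id n (a : 'M[T -> R]_n) : Prop :=
  exists b : 'M[{poly T -> R}]_n,
    SL_CTpoly b /\ map_mx (fun p => p.[0]) b = 1%:M
                /\ map_mx (fun p => p.[1]) b = a.

End CT.

From HB Require Import structures.
From mathcomp Require Import all_boot all_order all_algebra.
From mathcomp Require Import all_classical all_reals all_analysis.
From mathcomp Require Import ring lra.
Import Order.TTheory GRing.Theory Num.Theory.
Import numFieldNormedType.Exports.
Local Open Scope ring_scope.
Local Open Scope classical_set_scope.

(* For unit vectors u, w with <u, w> > -1, the matrix
   1 + (w - u) (u + w)^T / (1 + <u, w>) sends u to w; it is a transvection,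
   because (u + w)^T (w - u) = |w|^2 - |u|^2 = 0, so the polynomial path
   X |-> 1 + X (w - u) (u + w)^T / (1 + <u, w>) joins it to the identity inside
   SL_n.  Applied pointwise on T this works for u = H(., s), w = H(., s') as soon
   as H(., s') is uniformly close to H(., s), which by compactness of T holds
   for all s' near s.  Hence the set of s in [0, 1] for which H(., s) is the
   image of H(., 0) under a matrix connected to the identity is open and closed
   in [0, 1], and by connectedness it contains 1. *)

Lemma det_sylvester (R : comPzRingType) m n (a : 'M[R]_(m, n)) (b : 'M[R]_(n, m)) :
  \det (1%:M + a *m b) = \det (1%:M + b *m a).
Proof.
pose M := block_mx 1%:M (- a) b 1%:M.
have M_lower : M = block_mx 1%:M 0 b 1%:M *m block_mx 1%:M (- a) 0 (1%:M + b *m a).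
  rewrite mulmx_block !(mulmx1, mul1mx, mulmx0, mul0mx, addr0, add0r).
  by rewrite mulmxN addrCA addNr addr0.
have M_upper : M = block_mx (1%:M + a *m b) (- a) 0 1%:M *m block_mx 1%:M 0 b 1%:M.
  by rewrite mulmx_block !(mulmx1, mul1mx, mulmx0, mul0mx, addr0, add0r) mulNmx addrK.
have := congr1 determinant M_lower.
by rewrite {1}M_upper !det_mulmx det_lblock !det_ublock !det1 !mulr1 !mul1r.
Qed.

Lemma det_transvection (R : comPzRingType) n (a : 'cV[R]_n) (b : 'rV[R]_n) :
  b *m a = 0 -> \det (1%:M + a *m b) = 1.
Proof. by move=> ba0; rewrite det_sylvester ba0 addr0 det1. Qed.

Lemma dotmxC (R : comPzRingType) n (u w : 'cV[R]_n) : w^T *m u = u^T *m w.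
Proof. by rewrite -[w^T *m u]trmxK trmx_mul trmxK [_ *m _]mx11_scalar tr_scalar_mx. Qed.

Lemma unit_cols_orthogonal (R : comPzRingType) n (u w : 'cV[R]_n) :
  u^T *m u = 1 -> w^T *m w = 1 -> (u + w)^T *m (w - u) = 0.
Proof.
move=> uu1 ww1; rewrite [(u + w)^T]raddfD /= mulmxDl !mulmxBr uu1 ww1 dotmxC.
by rewrite addrC addrA subrK subrr.
Qed.

Lemma transvection_unit_col (R : comPzRingType) n (u w : 'cV[R]_n) (c : R) :
  u^T *m u = 1 -> c * (1 + (u^T *m w) 0 0) = 1 ->
  (1%:M + c *: (w - u) *m (u + w)^T) *m u = w.
Proof.
move=> uu1 c_inv; rewrite mulmxDl mul1mx -mulmxA [(u + w)^T]raddfD /= mulmxDl uu1 dotmxC.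
have -> : 1 + u^T *m w = (1 + (u^T *m w) 0 0)%:M.
  by rewrite {1}[u^T *m w]mx11_scalar rmorphD rmorph1.
by rewrite -scalemxAl scalemxAr scale_scalar_mx c_inv mulmx1 addrC subrK.
Qed.

Lemma mxOver_tr {R : Type} {m n} {S : {pred R}} {A : 'M[R]_(m, n)} :
  A \is a mxOver S -> A^T \is a mxOver S.
Proof. by move=> /mxOverP SA; apply/mxOverP => i j; rewrite mxE. Qed.

Section ContinuousFunctions.
Variables (T : ptopologicalType) (R : realType).
Local Notation F := (T -> R).

(* C(T) as a boolean predicate, so that the library's closure lemmas for
   subrings, polynomials and matrices over it apply. *)
Definition CT : {pred F} := [pred f | `[< isCT f >]].

Lemma CTP f : reflect (isCT f) (f \in CT).
Proof. exact: asboolP. Qed.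

Lemma CT_subring_closed : subring_closed CT.
Proof.
split.
- by apply/CTP => x; exact: cst_continuous.
- by move=> f g /CTP cf /CTP cg; apply/CTP => x; exact: (continuousB (cf x) (cg x)).
- by move=> f g /CTP cf /CTP cg; apply/CTP => x; exact: (continuousM (cf x) (cg x)).
Qed.

HB.instance Definition _ := GRing.isSubringClosed.Build F CT CT_subring_closed.

Lemma CT_mxP n (a : 'M[F]_n) : reflect (CT_mx a) (a \is a mxOver CT).
Proof. by apply: (iffP mxOverP) => ca i j; apply/CTP. Qed.

Lemma CTpolyP (p : {poly F}) : reflect (isCTpoly p) (p \is a polyOver CT).
Proof. by apply: (iffP polyOverP) => cp k; apply/CTP. Qed.

Definition SL_CT_conn {n} (a : 'M[F]_n) := SL_CT a /\ connected_to_id a.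

Lemma SL_CT_conn1 n : SL_CT_conn (1%:M : 'M[F]_n).
Proof.
split; first by split; [apply/CT_mxP; rewrite mxOver_scalar ?rpred0 ?rpred1 | exact: det1].
exists 1%:M; split; first split.
- by move=> i j; apply/CTpolyP; rewrite mxE rpred_nat.
- exact: det1.
by rewrite -!/(horner_eval _) !map_mx1.
Qed.

Lemma SL_CT_connM n (a1 a2 : 'M[F]_n) :
  SL_CT_conn a1 -> SL_CT_conn a2 -> SL_CT_conn (a1 *m a2).
Proof.
move=> [[/CT_mxP c1 d1] [b1 [[cb1 db1] [b1_0 b1_1]]]].
move=> [[/CT_mxP c2 d2] [b2 [[cb2 db2] [b2_0 b2_1]]]].
split; first by split; [apply/CT_mxP; exact: mxOverM | rewrite det_mulmx d1 d2 mulr1].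
exists (b1 *m b2); split; first split.
- have /mxOverP cb : b1 *m b2 \is a mxOver (polyOver CT).
    by apply: mxOverM; apply/mxOverP => i j; apply/CTpolyP.
  by move=> i j; apply/CTpolyP.
- by rewrite det_mulmx db1 db2 mulr1.
by rewrite -!/(horner_eval _) !map_mxM -!/(horner_eval _) b1_0 b2_0 b1_1 b2_1 mulmx1.
Qed.

Lemma SL_CT_conn_transvection n (a : 'cV[F]_n) (b : 'rV[F]_n) :
  a \is a mxOver CT -> b \is a mxOver CT -> b *m a = 0 ->
  SL_CT_conn (1%:M + a *m b).
Proof.
move=> ca cb ba0.
split.
  split; last exact: det_transvection.
  by apply/CT_mxP; rewrite rpredD ?mxOver_scalar ?rpred0 ?rpred1 ?mxOverM.
pose beta := 1%:M + 'X *: map_mx polyC (a *m b).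
have eval_beta x : map_mx (fun p => p.[x]) beta = 1%:M + x *: (a *m b).
  by apply/matrixP => i j; rewrite !mxE !hornerE hornerMn hornerC.
exists beta; split; first split.
- move=> i j; apply/CTpolyP.
  rewrite !mxE rpredD ?rpred_nat // rpredM ?polyOverX // polyOverC.
  by apply: rpred_sum => k _; apply: rpredM; [exact: (mxOverP ca) | exact: (mxOverP cb)].
- rewrite /beta map_mxM scalemxAl det_transvection //.
  by rewrite -scalemxAr -map_mxM ba0 map_mx0 scaler0.
by rewrite !eval_beta scale0r addr0 scale1r.
Qed.

Lemma SL_CT_conn_transport n (u w : 'cV[F]_n) :
  u \is a mxOver CT -> w \is a mxOver CT -> u^T *m u = 1 -> w^T *m w = 1 ->
  (forall t, 0 < 1 + (u^T *m w) 0 0 t) ->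
  exists alpha, SL_CT_conn alpha /\ alpha *m u = w.
Proof.
move=> cu cw uu1 ww1 uw_gt.
have /mxOverP/(_ 0 0)/CTP cd := mxOverM (mxOver_tr cu) cw.
pose c : F := fun t => (1 + (u^T *m w) 0 0 t)^-1.
have cc : c \in CT.
  apply/CTP => t; apply: (@continuousV _ _ (fun t => 1 + (u^T *m w) 0 0 t)).
    by rewrite gt_eqF.
  by apply: continuousD; [exact: cst_continuous | exact: cd].
have c_inv : c * (1 + (u^T *m w) 0 0) = 1.
  by apply/funext => t; rewrite /c mulrfctE addrfctE -[1 t]/(1 : R) mulVf // gt_eqF.
exists (1%:M + c *: (w - u) *m (u + w)^T).
split; last exact: transvection_unit_col.
apply: SL_CT_conn_transvection.
- by rewrite mxOverZ // rpredB.
- by rewrite mxOver_tr // rpredD.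
- by rewrite -scalemxAr unit_cols_orthogonal // scaler0.
Qed.

End ContinuousFunctions.

Arguments CT {T R}.
Arguments SL_CT_conn {T R n}.

Lemma near_uniform_slices {R : numFieldType} {T S : topologicalType}
    {U : pseudoMetricType R} (A : set S) (f : T * S -> U) {s0 : S} {e : R} :
  compact [set: T] -> {within [set p | A p.2], continuous f} -> A s0 -> 0 < e ->
  \forall s \near s0, A s -> forall t, ball (f (t, s0)) e (f (t, s)).
Proof.
move=> /compact_near_coveringP cover /subspace_continuousP fc As0 e_gt0.
pose P s t := A s -> ball (f (t, s0)) e (f (t, s)).
suff near_t : forall t, [set: T] t -> \forall t' \near t & s \near s0, P s t'.
  by apply: filterS (cover _ (nbhs s0) P _ near_t) => s Ps As t; exact: Ps.
have e2_gt0 : 0 < e / 2 by rewrite divr_gt0.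
move=> t _; have := fc (t, s0) As0 => /cvg_ball /(_ (e / 2) e2_gt0).
rewrite /within /= => -[[V W] /= [nV nW] VW].
exists (V, W) => // -[t' s] /= [Vt' Ws] As.
apply: (@ball_splitr _ _ (f (t, s0))).
- exact: VW (t', s0) (conj Vt' (nbhs_singleton nW)) As0.
- exact: VW (t', s) (conj Vt' Ws) As.
Qed.

Lemma within_continuous_slice {T S U : topologicalType} (A : set S)
    (f : T * S -> U) (s : S) :
  {within [set p | A p.2], continuous f} -> A s -> continuous (fun t => f (t, s)).
Proof.
move=> /subspace_continuousP fc As t B /(fc (t, s) As).
rewrite /within /= => -[[V W] /= [nV nW] VW].
by apply: filterS nV => t' Vt'; exact: VW (t', s) (conj Vt' (nbhs_singleton nW)) As.
Qed.

Lemma connected_near_induction (S : topologicalType) (A : set S) (P : S -> Prop) a :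
  connected A -> A a -> P a ->
  (forall s, A s -> \forall s' \near s, A s' -> (P s <-> P s')) ->
  forall s, A s -> P s.
Proof.
move=> cA Aa Pa loc.
suff <- : [set s | A s /\ P s] = A by move=> s [].
apply: cA; first by exists a.
- exists (interior [set s | A s -> P s]); first exact: open_interior.
  apply/seteqP; split => s.
  + move=> [As Ps]; split => //.
    by apply: filterS (loc s As) => s' PP As'; apply/(PP As').
  + by move=> [As /nbhs_singleton Ps]; split => //; exact: Ps.
- exists (closure [set s | A s /\ P s]); first exact: closed_closure.
  apply/seteqP; split => s.
  + by move=> [As Ps]; split => //; exact: subset_closure.
  + move=> [As cl]; split => //.
    have [s' [[As' Ps'] PP]] := cl _ (loc s As).
    by apply/(PP As').
Qed.

Lemma unit_rows_close_dot_gt (R : realFieldType) n (x y : 'rV[R]_n) :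
  \sum_i x 0 i ^+ 2 = 1 -> \sum_i y 0 i ^+ 2 = 1 -> ball x n%:R^-1 y ->
  0 < 1 + \sum_i x 0 i * y 0 i.
Proof.
move=> xx1 yy1 [_ xy].
have dist_le1 : \sum_i (x 0 i - y 0 i) ^+ 2 <= 1.
  apply: (@le_trans _ _ (\sum_(i < n) n%:R^-1 ^+ 2)).
    apply: ler_sum => i _; move: (xy 0 i); rewrite /ball /= ltr_norml => /andP[].
    have : 0 <= n%:R^-1 :> R by rewrite invr_ge0.
    nra.
  rewrite sumr_const card_ord; case: n {x y xx1 yy1 xy} => [|m]; first by rewrite mulr0n.
  rewrite -[_ *+ _]mulr_natr expr2 -mulrA mulVf ?pnatr_eq0 // mulr1 invf_le1 //.
  by rewrite ler1n.
have dist_expand : \sum_i (x 0 i - y 0 i) ^+ 2 =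
    \sum_i x 0 i ^+ 2 + \sum_i y 0 i ^+ 2 - 2 * \sum_i x 0 i * y 0 i.
  rewrite -big_split /= mulr_sumr -sumrB.
  by apply: eq_bigr => i _; ring.
rewrite dist_expand xx1 yy1 in dist_le1; lra.
Qed.

Section Homotopy.
Context {R : realType} {T : ptopologicalType} {n : nat} {H : T * R -> 'rV[R]_n}.
Hypothesis T_compact : compact [set: T].
Hypothesis n_gt0 : (0 < n)%N.
Hypothesis H_cont : {within [set p : T * R | p.2 \in `[0, 1]], continuous H}.
Hypothesis H_sphere : forall t s, s \in `[0, 1] -> \sum_(i < n) (H (t, s) 0 i) ^+ 2 = 1.

Definition slice s : 'cV[T -> R]_n := \col_i (fun t => H (t, s) 0 i).

Lemma slice_CT s : s \in `[0, 1] -> slice s \is a mxOver CT.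
Proof.
move=> s01; apply/mxOverP => i j; apply/CTP => t; rewrite mxE.
apply: (@continuous_comp _ _ _ (fun t => H (t, s)) (fun M => M 0 i)).
  exact: (within_continuous_slice (fun s : R => s \in `[0, 1]) H s H_cont).
exact: coord_continuous.
Qed.

Lemma slice_dot s s' t :
  ((slice s)^T *m slice s') 0 0 t = \sum_i H (t, s) 0 i * H (t, s') 0 i.
Proof. by rewrite mxE fct_sumE; apply: eq_bigr => i _; rewrite !mxE. Qed.

Lemma slice_unit s : s \in `[0, 1] -> (slice s)^T *m slice s = 1.
Proof.
move=> s01; apply/matrixP => i j; rewrite !ord1; apply/funext => t.
rewrite slice_dot !mxE -[1%:R t]/(1 : R) -(H_sphere t _ s01).
by apply: eq_bigr => k _; rewrite expr2.
Qed.

Lemma slice_transport {s s' : R} : s \in `[0, 1] -> s' \in `[0, 1] ->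
  (forall t, ball (H (t, s)) n%:R^-1 (H (t, s'))) ->
  exists alpha, SL_CT_conn alpha /\ alpha *m slice s = slice s'.
Proof.
move=> s01 s'01 close; apply: SL_CT_conn_transport; rewrite ?slice_CT ?slice_unit //.
by move=> t; rewrite slice_dot; apply: unit_rows_close_dot_gt; rewrite ?H_sphere.
Qed.

Lemma slice_reachable {s : R} : s \in `[0, 1] ->
  exists alpha, SL_CT_conn alpha /\ alpha *m slice 0 = slice s.
Proof.
move: s; apply: (@connected_near_induction _ [set s : R | s \in `[0, 1]] _ 0).
- by apply/connected_intervalP; rewrite set_mem_set; exact: interval_is_interval.
- by rewrite /= in_setE /= in_itv /= lexx ler01.
- by exists 1%:M; rewrite mul1mx; split; first exact: SL_CT_conn1.
move=> s s01; have e_gt0 : 0 < n%:R^-1 :> R by rewrite invr_gt0 ltr0n.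
apply: filterS (near_uniform_slices (fun s : R => s \in `[0, 1]) H
  T_compact H_cont s01 e_gt0) => s' close s'01.
split=> -[alpha [alpha_conn alpha_slice]].
- have [beta [beta_conn beta_slice]] := slice_transport s01 s'01 (close s'01).
  exists (beta *m alpha); split; first exact: SL_CT_connM.
  by rewrite -mulmxA alpha_slice.
- have [beta [beta_conn beta_slice]] :=
    slice_transport s'01 s01 (fun t => ball_sym (close s'01 t)).
  exists (beta *m alpha); split; first exact: SL_CT_connM.
  by rewrite -mulmxA alpha_slice.
Qed.

End Homotopy.

Arguments slice {R T n} H s.

Theorem theorem3p5 (R : realType) (T : ptopologicalType)
  (T_compact : compact [set: T]) (T_hausdorff : hausdorff_space T)
  (n : nat) (n_ge1 : (1 <= n)%N)
  (H : T * R -> 'rV[R]_n)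
  (H_cont : {within [set p : T * R | p.2 \in `[0, 1]], continuous H})
  (H_sphere : forall (t : T) (s : R), s \in `[0, 1] ->
                \sum_(i < n) (H (t, s) 0 i) ^+ 2 = 1) :
  let v0 : 'rV[T -> R]_n := \row_i (fun t => H (t, 0) 0 i) in
  let v1 : 'rV[T -> R]_n := \row_i (fun t => H (t, 1) 0 i) in
  exists alpha : 'M[T -> R]_n,
    SL_CT alpha /\ connected_to_id alpha /\ alpha *m v0^T = v1^T.
Proof.
move=> v0 v1.
have s1 : (1 : R) \in `[0, 1] by rewrite in_setE /= in_itv /= lexx ler01.
have [alpha [[alpha_SL alpha_conn] alpha_slice]] :=
  slice_reachable T_compact n_ge1 H_cont H_sphere s1.
exists alpha; do 2!split => //.
have slice_tr s : slice H s = (\row_i (fun t => H (t, s) 0 i))^T.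
  by apply/matrixP => i j; rewrite !mxE.
by rewrite -!slice_tr.
Qed.
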